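(* For any evaporation rate $\gamma$, the DGLS variant $(A,\gamma,tab)$ described in the context is equivalent to MGM: in every round, given the same current assignment, each agent $i$ computes the same best value $d_i^*$ (under the same tie-breaking) and the same gain $\Delta_i$ as in MGM, and hence makes the same move.
   Context: A (binary) Distributed Constraint Optimization Problem (DCOP) consists of agents $1,\dots,n$, each controlling one variable $x_i$ with finite domain $D_i$, and binary constraint functions $f_{ij}:D_i\times D_j\to\mathbb{R}_{\ge0}$ with $f_{ji}=f_{ij}^T$; $\mathcal{N}_i$ is the set of neighbors of $i$. Write $\check f_{ij}=\min f_{ij}$, $\hat f_{ij}=\max f_{ij}$. MGM (Maximum Gain Message): in each synchronous round, each agent $i$, knowing neighbors' current values $d_j$, computes $d_i^*\in\arg\min_{d\in D_i}\sum_{j\in\mathcal{N}_i} f_{ij}(d,d_j)$ and gain $\Delta_i=\sum_{j\in\mathcal{N}_i}[f_{ij}(d_i,d_j)-f_{ij}(d_i^*,d_j)]$, exchanges gains with neighbors, and sets $d_i\gets d_i^*$ iff $\Delta_i>0$ and $\Delta_i$ is the best improvement among itself and its neighbors. DGLS with parameters $(A,\gamma,tab)$ (additive manner, evaporation rate $\gamma$, table scope): each agent $i$ keeps, for each $j\in\mathcal{N}_i$, a cost modifier $M_{ij}$ (a $|D_i|\times|D_j|$ real matrix), initialized to $0$, and uses effective cost $\mathrm{EffCost}(d_i,j,d_j)=f_{ij}(d_i,d_j)+M_{ij}(d_i,d_j)$. Initially each agent picks a random value and sends it to its neighbors. In each synchronous round agent $i$: (1) sets $\bar P_i=\emptyset$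 and receives neighbors' values $d_j$; (2) computes $d_i^*\in\arg\min_{d\in D_i}\sum_{j}\mathrm{EffCost}(d,j,d_j)$ and gain $\Delta_i=\sum_{j}[\mathrm{EffCost}(d_i,j,d_j)-\mathrm{EffCost}(d_i^*,j,d_j)]$, and exchanges gains; (3) if $\Delta_i>0$ and $\Delta_i$ is the best improvement among itself and its neighbors, sets $d_i\gets d_i^*$; otherwise, if no neighbor can improve, for each $j\in\mathcal{N}_i$ declares $f_{ij}$ violated with probability $\eta=\frac{f_{ij}(d_i,d_j)-\check f_{ij}}{\hat f_{ij}-\check f_{ij}}$, and for each violated one adds $j$ to $\bar P_i$ and sends SYNC to $j$; (4) lets $\tilde P_i$ be the set of neighbors from which it received SYNC; (5) for each $j$: $M_{ij}\gets\gamma M_{ij}$ entrywise, then if $j\in\bar P_i\cup\tilde P_i$ increases every entry of $M_{ij}$ by 1; (6) sends $d_i$ to neighbors. *)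

From HB Require Import structures.
From mathcomp Require Import all_boot all_order all_algebra.
Unset Printing Implicit Defensive.
Import Order.TTheory GRing.Theory Num.Theory.
Local Open Scope ring_scope.

Section DCOP.
Variables (R : realFieldType) (A : finType) (D : A -> finType).
(* neighbourhood relation: j \in N_i  <->  N i j *)
Variable N : rel A.
Variable f : forall i j : A, D i -> D j -> R.

Definition assignment := forall i : A, D i.
(* cost modifiers M_ij, viewed as functions D_i x D_j -> R (= |D_i|x|D_j| matrices) *)
Definition modifiers := forall i j : A, D i -> D j -> R.

Definition argmin_set (i : A) (c : D i -> R) : {set D i} :=
  [set d | [forall e, c d <= c e]].

Definition tiebreak := forall i : A, {set D i} -> D i.

(* "Delta_i is the best improvement among itself and its neighbours";
   ties between equal gains are resolved by a priority relation prio. *)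
Definition moves (prio : rel A) (g : A -> R) (i : A) : bool :=
  (0 < g i) && [forall j, N i j ==> ((g j < g i) || ((g j == g i) && prio i j))].

Definition mgm_cost (a : assignment) (i : A) (d : D i) : R :=
  \sum_(j | N i j) f i j d (a j).

Definition mgm_dstar (tb : tiebreak) (a : assignment) (i : A) : D i :=
  tb i (argmin_set i (mgm_cost a i)).

Definition mgm_gain (tb : tiebreak) (a : assignment) (i : A) : R :=
  mgm_cost a i (a i) - mgm_cost a i (mgm_dstar tb a i).

Definition mgm_step (tb : tiebreak) (prio : rel A) (a : assignment) : assignment :=
  fun i => if moves prio (mgm_gain tb a) i then mgm_dstar tb a i else a i.

Record state := State { vals : assignment; mods : modifiers }.

Definition eff_cost (st : state) (i : A) (d : D i) : R :=
  \sum_(j | N i j) (f i j d (vals st j) + mods st i j d (vals st j)).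

Definition dgls_dstar (tb : tiebreak) (st : state) (i : A) : D i :=
  tb i (argmin_set i (eff_cost st i)).

Definition dgls_gain (tb : tiebreak) (st : state) (i : A) : R :=
  eff_cost st i (vals st i) - eff_cost st i (dgls_dstar tb st i).

(* i declares f_ij violated (j \in \bar P_i): only possible when i does not move
   and no neighbour can improve; [viol i j] is the outcome of the random draw. *)
Definition declared (tb : tiebreak) (prio : rel A) (st : state)
    (viol : A -> A -> bool) (i j : A) : bool :=
  let g := dgls_gain tb st in
  [&& N i j, ~~ moves prio g i, [forall k, N i k ==> (g k <= 0)] & viol i j].

Definition dgls_round (tb : tiebreak) (prio : rel A) (gamma : R)
    (st : state) (viol : A -> A -> bool) : state :=
  let g := dgls_gain tb st in
  State (fun i => if moves prio g i then dgls_dstar tb st i else vals st i)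
        (fun i j x y => gamma * mods st i j x y +
           (if declared tb prio st viol i j || (N i j && declared tb prio st viol j i)
            then 1 else 0)).

(* state at the beginning of round t; modifiers start at 0 *)
Fixpoint dgls_run (tb : tiebreak) (prio : rel A) (gamma : R) (a0 : assignment)
    (viol : nat -> A -> A -> bool) (t : nat) : state :=
  match t with
  | 0 => State a0 (fun i j _ _ => 0)
  | t'.+1 => dgls_round tb prio gamma (dgls_run tb prio gamma a0 viol t') (viol t')
  end.

End DCOP.

(** In the table scope every modifier matrix [M_ij] starts at [0] and, in each
    round, is scaled by [gamma] and possibly raised by [1] in every entry, so it
    stays a constant matrix.  Hence the effective cost of agent [i] differs from
    its MGM cost by an amount independent of its own value: the minimisers, and
    therefore the tie-broken choice [d_i^*], coincide, and the shift cancels in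
    the gain.  Equal gains give equal moves. *)
From Pilot Require Import Defs.
From HB Require Import structures.
From mathcomp Require Import all_boot all_order all_algebra.
Import Order.TTheory GRing.Theory Num.Theory.
Local Open Scope ring_scope.

Section TableScope.
Variables (R : realFieldType) (A : finType) (D : A -> finType).
Variables (N : rel A) (f : forall i j : A, D i -> D j -> R).
Variables (tb : tiebreak A D) (prio : rel A) (gamma : R).

Local Notation argmin_set := (argmin_set R A D).
Local Notation moves := (moves R A N prio).
Local Notation mgm_cost := (mgm_cost R A D N f).
Local Notation mgm_dstar := (mgm_dstar R A D N f tb).
Local Notation mgm_gain := (mgm_gain R A D N f tb).
Local Notation mgm_step := (mgm_step R A D N f tb prio).
Local Notation vals := (vals R A D).
Local Notation mods := (mods R A D).
Local Notation eff_cost := (eff_cost R A D N f).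
Local Notation dgls_dstar := (dgls_dstar R A D N f tb).
Local Notation dgls_gain := (dgls_gain R A D N f tb).
Local Notation dgls_round := (dgls_round R A D N f tb prio gamma).
Local Notation dgls_run := (dgls_run R A D N f tb prio gamma).

Lemma argmin_set_shift {i : A} {c c' : D i -> R} {k : R} :
  (forall d, c' d = c d + k) -> argmin_set i c' = argmin_set i c.
Proof.
move=> shift; apply/setP => d; rewrite !inE.
by apply: eq_forallb => e; rewrite !shift lerD2r.
Qed.

Lemma eq_moves {g g' : A -> R} : g =1 g' -> moves g =1 moves g'.
Proof.
move=> eq_g i; rewrite /Defs.moves eq_g; congr (_ && _).
by apply: eq_forallb => j; rewrite !eq_g.
Qed.

Definition table_constant (M : modifiers R A D) : Prop :=
  forall i j (x x' : D i) (y y' : D j), M i j x y = M i j x' y'.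

Lemma dgls_round_table_constant (st : state R A D) (viol : A -> A -> bool) :
  table_constant (mods st) -> table_constant (mods (dgls_round st viol)).
Proof. by move=> cst i j x x' y y' /=; rewrite (cst i j x x' y y'). Qed.

Lemma dgls_run_table_constant (a0 : assignment A D)
    (viol : nat -> A -> A -> bool) (t : nat) :
  table_constant (mods (dgls_run a0 viol t)).
Proof.
elim: t => [|t IHt]; first by [].
exact: dgls_round_table_constant.
Qed.

Section ConstantModifiers.
Variable st : state R A D.
Hypothesis mods_const : table_constant (mods st).

Lemma eff_cost_shift (i : A) (d : D i) :
  eff_cost st i d = mgm_cost (vals st) i d
                    + \sum_(j | N i j) mods st i j (vals st i) (vals st j).
Proof.
rewrite /Defs.eff_cost /Defs.mgm_cost -big_split; apply: eq_bigr => j _.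
by rewrite (mods_const i j d (vals st i) (vals st j) (vals st j)).
Qed.

Lemma dgls_dstar_mgm (i : A) : dgls_dstar st i = mgm_dstar (vals st) i.
Proof.
rewrite /Defs.dgls_dstar /Defs.mgm_dstar.
by rewrite (argmin_set_shift (eff_cost_shift i)).
Qed.

Lemma dgls_gain_mgm (i : A) : dgls_gain st i = mgm_gain (vals st) i.
Proof.
rewrite /Defs.dgls_gain /Defs.mgm_gain dgls_dstar_mgm !eff_cost_shift.
by rewrite opprD addrACA subrr addr0.
Qed.

Lemma dgls_round_vals_mgm (viol : A -> A -> bool) (i : A) :
  vals (dgls_round st viol) i = mgm_step (vals st) i.
Proof.
by rewrite /Defs.dgls_round /Defs.mgm_step /= (eq_moves dgls_gain_mgm) dgls_dstar_mgm.
Qed.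

End ConstantModifiers.
End TableScope.

Theorem theorem4 (R : realFieldType) (A : finType) (D : A -> finType)
    (N : rel A) (f : forall i j : A, D i -> D j -> R)
    (N_sym : forall i j, N i j = N j i) (N_irr : forall i, ~~ N i i)
    (f_sym : forall i j (x : D i) (y : D j), f j i y x = f i j x y)
    (f_ge0 : forall i j (x : D i) (y : D j), 0 <= f i j x y)
    (gamma : R) (tb : tiebreak A D)
    (tb_spec : forall i (S : {set D i}), S != set0 -> tb i S \in S)
    (prio : rel A) (a0 : assignment A D) (viol : nat -> A -> A -> bool) (t : nat) :
  let st := dgls_run R A D N f tb prio gamma a0 viol t in
  forall i : A,
    dgls_dstar R A D N f tb st i = mgm_dstar R A D N f tb (vals R A D st) i /\
    dgls_gain R A D N f tb st i = mgm_gain R A D N f tb (vals R A D st) i /\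
    vals R A D (dgls_round R A D N f tb prio gamma st (viol t)) i
      = mgm_step R A D N f tb prio (vals R A D st) i.
Proof.
move=> st i.
have mods_const := dgls_run_table_constant R A D N f tb prio gamma a0 viol t.
split; first exact: dgls_dstar_mgm.
split; first exact: dgls_gain_mgm.
exact: dgls_round_vals_mgm.
Qed.
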